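(* The block-asynchronous linear iteration for solving the lower block triangular system $\mathbf{Lx}=\mathbf{b}$ converges in a finite number of steps to the solution $\mathbf{L}^{-1}\mathbf{b}$.
   Context: $\mathbf{L}\in\mathbb{R}^{n\times n}$ is lower block triangular with square $b\times b$ blocks ($n$ divisible by $b$, $n/b$ blocks) and nonsingular diagonal blocks, split as $\mathbf{L}=\mathbf{D}+\tilde{\mathbf{L}}$ with $\mathbf{D}$ block diagonal and $\tilde{\mathbf{L}}$ strictly lower block triangular. Let $\boldsymbol{\psi}(\mathbf{x}):=\mathbf{D}^{-1}\mathbf{b}-\mathbf{D}^{-1}\tilde{\mathbf{L}}\mathbf{x}$, and denote by $\mathbf{x}_i$, $\boldsymbol{\psi}_i$ the $i$th sub-vector of length $b$. The block-asynchronous iteration is $\mathbf{x}_i^{j+1}=\mathbf{x}_i^j$ if $i\neq u(j)$ and $\mathbf{x}_i^{j+1}=\boldsymbol{\psi}_i(x_1^{j-s_1(j)},\dots,x_n^{j-s_n(j)})$ if $i=u(j)$, where the shift functions $s_\alpha:\mathbb{N}\to\mathbb{N}$ ($\alpha=1,\dots,n$) satisfy $0\le s_\alpha(j)\le\min\{j-1,\hat s\}$ for some fixed $\hat s\in\mathbb{N}$, and the update function $u:\mathbb{N}\to\{1,\dots,n/b\}$ satisfies: for every $i\in\{1,\dots,n/b\}$ and $j\in\mathbb{N}$ there exists $l>j$ with $u(l)=i$. *)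

From HB Require Import structures.
From mathcomp Require Import all_boot all_order all_algebra.
Set Implicit Arguments. Unset Strict Implicit. Unset Printing Implicit Defensive.
Import Order.TTheory GRing.Theory Num.Theory.
Local Open Scope ring_scope.

(* Block structure: n = m * b, with m = n/b blocks of size b.
   Scalar index alpha : 'I_(m*b) lies in block alpha %/ b (0-based).
   bidx k p is the p-th scalar index of the k-th block, i.e. k*b + p. *)
Lemma bidx_lt (m b : nat) (k : 'I_m) (p : 'I_b) : (k * b + p < m * b)%N.
Proof.
case: k => k hk; case: p => p hp /=.
apply: (@leq_trans (k * b + b)); first by rewrite ltn_add2l.
by rewrite -mulSnr leq_mul2r hk orbT.
Qed.

Definition bidx (m b : nat) (k : 'I_m) (p : 'I_b) : 'I_(m * b) :=
  Ordinal (bidx_lt k p).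

Definition diag_block (R : pzRingType) (m b : nat) (L : 'M[R]_(m * b)) (k : 'I_m)
  : 'M[R]_b := \matrix_(p, q) L (bidx k p) (bidx k q).

Definition lower_block_triangular (R : pzRingType) (m b : nat) (L : 'M[R]_(m * b)) :=
  forall i j : 'I_(m * b), (i %/ b < j %/ b)%N -> L i j = 0.

Definition blockD (R : pzRingType) (m b : nat) (L : 'M[R]_(m * b)) : 'M[R]_(m * b) :=
  \matrix_(i, j) (if (i %/ b == j %/ b)%N then L i j else 0).

Definition blockLt (R : pzRingType) (m b : nat) (L : 'M[R]_(m * b)) : 'M[R]_(m * b) :=
  L - blockD L.

Definition psi (R : fieldType) (m b : nat) (L : 'M[R]_(m * b)) (bv x : 'cV[R]_(m * b))
  : 'cV[R]_(m * b) :=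
  invmx (blockD L) *m bv - invmx (blockD L) *m (blockLt L *m x).

From HB Require Import structures.
From mathcomp Require Import all_boot all_order all_algebra zify.
Set Implicit Arguments. Unset Strict Implicit. Unset Printing Implicit Defensive.
Import Order.TTheory GRing.Theory Num.Theory.
Local Open Scope ring_scope.

(* Since D^-1 is block diagonal and Ltilde is strictly lower block triangular,
   block c of psi(z) depends only on the blocks of z below c, and the solution
   y = L^-1 b is a fixed point of psi.  Hence, by induction on c: once blocks
   below c hold y from time J on, the first update of block c after time
   J + shat reads only iterates from time >= J, so it produces y on block c, and
   every later update of block c does the same. *)

Section BlockIndex.
Variables m b : nat.

Lemma block_size_gt0 (i : 'I_(m * b)) : (0 < b)%N.
Proof. by case: i; case: b => //; rewrite muln0. Qed.

Lemma block_lt (i : 'I_(m * b)) : (i %/ b < m)%N.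
Proof. by rewrite ltn_divLR ?(block_size_gt0 i). Qed.

Lemma bidx_divn (k : 'I_m) (p : 'I_b) : (bidx k p %/ b)%N = k.
Proof.
rewrite /= divnMDl; last by case: p; case: b.
by rewrite divn_small ?addn0.
Qed.

Lemma bidx_modn (k : 'I_m) (p : 'I_b) : (bidx k p %% b)%N = p.
Proof. by rewrite /= modnMDl modn_small. Qed.

Definition block_of (i : 'I_(m * b)) : 'I_m := Ordinal (block_lt i).

Definition offset_of (i : 'I_(m * b)) : 'I_b :=
  Ordinal (ltn_pmod i (block_size_gt0 i)).

Lemma bidx_block_offset (i : 'I_(m * b)) : bidx (block_of i) (offset_of i) = i.
Proof. by apply: val_inj; rewrite /= -divn_eq. Qed.

Lemma big_blocks (V : nmodType) (F : 'I_(m * b) -> V) :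
  \sum_i F i = \sum_(k < m) \sum_(p < b) F (bidx k p).
Proof.
rewrite pair_bigA (reindex (fun kp : 'I_m * 'I_b => bidx kp.1 kp.2)) //=.
exists (fun i => (block_of i, offset_of i)) => [[k p] _ | i _].
  by congr pair; apply: val_inj; rewrite /= ?bidx_divn ?bidx_modn.
exact: bidx_block_offset.
Qed.

Definition col_block (T : Type) (v : 'cV[T]_(m * b)) (k : 'I_m) : 'cV[T]_b :=
  \col_p v (bidx k p) 0.

Definition agree_below (T : Type) (c : nat) (z z' : 'cV[T]_(m * b)) :=
  forall i : 'I_(m * b), (i %/ b < c)%N -> z i 0 = z' i 0.

End BlockIndex.

Lemma unitmx_inj_col (R : fieldType) (n : nat) (M : 'M[R]_n) :
  (forall v : 'cV_n, M *m v = 0 -> v = 0) -> M \in unitmx.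
Proof.
move=> injM; rewrite -unitmx_tr -row_free_unit; apply: inj_row_free => v.
move/(congr1 trmx); rewrite trmx_mul trmxK trmx0 => /injM.
by move/(congr1 trmx); rewrite trmxK trmx0.
Qed.

Lemma comm_mx_invmx (R : comUnitRingType) (n : nat) (A B : 'M[R]_n) :
  A \in unitmx -> comm_mx A B -> comm_mx (invmx A) B.
Proof.
move=> Au AB; rewrite /comm_mx -[LHS]mulmx1 -(mulmxV Au) mulmxA.
by rewrite -(mulmxA _ B) -AB !mulmxA mulVmx // mul1mx.
Qed.

Section BlockMatrices.
Variables (R : fieldType) (m b : nat).
Implicit Types (L M D : 'M[R]_(m * b)) (v z : 'cV[R]_(m * b)).

Definition block_diagonal D :=
  forall i j : 'I_(m * b), (i %/ b != j %/ b)%N -> D i j = 0.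

Lemma blockD_block_diagonal L : block_diagonal (blockD L).
Proof. by move=> i j /negbTE ne; rewrite mxE ne. Qed.

Lemma lower_block_triangular_blockD L :
  lower_block_triangular L -> lower_block_triangular (blockD L).
Proof. by move=> hL i j lt_ij; rewrite mxE (ltn_eqF lt_ij). Qed.

Lemma diag_block_blockD L k : diag_block (blockD L) k = diag_block L k.
Proof. by apply/matrixP => p q; rewrite !mxE !bidx_divn eqxx. Qed.

Lemma blockLt_eq0 L (i j : 'I_(m * b)) :
  lower_block_triangular L -> (i %/ b <= j %/ b)%N -> blockLt L i j = 0.
Proof.
move=> hL; rewrite leq_eqVlt => /orP[/eqP eq_ij | lt_ij]; rewrite !mxE.
  by rewrite eq_ij eqxx subrr.
by rewrite (ltn_eqF lt_ij) hL // subr0.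
Qed.

Lemma col_block_mulmx M v (k : 'I_m) :
  lower_block_triangular M ->
  (forall i : 'I_(m * b), (i %/ b < k)%N -> v i 0 = 0) ->
  col_block (M *m v) k = diag_block M k *m col_block v k.
Proof.
move=> hM v0; apply/matrixP => p j; rewrite ord1 !mxE big_blocks (bigD1 k) //=.
rewrite [X in _ + X]big1 ?addr0; first by apply: eq_bigr => q _; rewrite !mxE.
move=> k' /negbTE ne_k'k; apply: big1 => q _.
have [lt_k'k | lt_kk' | /val_inj eq_k'k] := ltngtP k' k.
- by rewrite v0 ?bidx_divn // mulr0.
- by rewrite hM ?mul0r // !bidx_divn.
- by rewrite eq_k'k eqxx in ne_k'k.
Qed.

Lemma lower_block_triangular_mulmx_eq0 M v :
  lower_block_triangular M -> (forall k, diag_block M k \in unitmx) ->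
  M *m v = 0 -> v = 0.
Proof.
move=> hM hD Mv0.
suff v0 c (i : 'I_(m * b)) : (i %/ b < c)%N -> v i 0 = 0.
  by apply/matrixP => i j; rewrite ord1 mxE (v0 m) ?block_lt.
elim: c i => [//|c IHc] i.
rewrite ltnS leq_eqVlt => /orP[/eqP i_c | ]; last exact: IHc.
have vc0 : col_block v (block_of i) = 0.
  rewrite -[col_block v _](mulKmx (hD (block_of i))) -col_block_mulmx //.
    rewrite Mv0 (_ : col_block 0 (block_of i) = 0) ?mulmx0 //.
    by apply/matrixP => p q; rewrite !mxE.
  by move=> j; rewrite /= i_c; apply: IHc.
have := congr1 (fun w : 'cV[R]_b => w (offset_of i) 0) vc0.
by rewrite !mxE bidx_block_offset.
Qed.

Lemma lower_block_triangular_unitmx M :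
  lower_block_triangular M -> (forall k, diag_block M k \in unitmx) -> M \in unitmx.
Proof.
by move=> hM hD; apply: unitmx_inj_col => v; apply: lower_block_triangular_mulmx_eq0.
Qed.

Lemma blockD_unitmx L :
  lower_block_triangular L -> (forall k, diag_block L k \in unitmx) ->
  blockD L \in unitmx.
Proof.
move=> hL hD; apply: lower_block_triangular_unitmx.
  exact: lower_block_triangular_blockD.
by move=> k; rewrite diag_block_blockD.
Qed.

Definition block_proj (k : nat) : 'M[R]_(m * b) :=
  diag_mx (\row_i ((i %/ b == k)%N)%:R).

Lemma block_diagonalP D : block_diagonal D <-> forall k, comm_mx D (block_proj k).
Proof.
split=> [hD k | hD i j ne_ij].
  apply/matrixP => i j; rewrite mul_mx_diag mul_diag_mx !mxE.
  have [eq_ij | ne_ij] := eqVneq (i %/ b)%N (j %/ b)%N.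
    by rewrite eq_ij mulrC.
  by rewrite hD // mulr0 mul0r.
have := congr1 (fun A : 'M[R]_(m * b) => A i j) (hD (i %/ b)%N : D *m _ = _).
by rewrite mul_mx_diag mul_diag_mx !mxE eqxx eq_sym (negbTE ne_ij) mulr0 mul1r.
Qed.

Lemma invmx_block_diagonal D :
  D \in unitmx -> block_diagonal D -> block_diagonal (invmx D).
Proof.
by move=> Du /block_diagonalP hD; apply/block_diagonalP => k; apply: comm_mx_invmx.
Qed.

Lemma blockLt_mulmx_agree L z z' (i : 'I_(m * b)) :
  lower_block_triangular L -> agree_below (i %/ b) z z' ->
  (blockLt L *m z) i 0 = (blockLt L *m z') i 0.
Proof.
move=> hL zz'; rewrite !mxE; apply: eq_bigr => j _.
have [lt_ji | le_ij] := ltnP (j %/ b) (i %/ b); first by rewrite zz'.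
by rewrite blockLt_eq0 // !mul0r.
Qed.

Lemma psi_agree L bv z z' (i : 'I_(m * b)) :
  lower_block_triangular L -> blockD L \in unitmx -> agree_below (i %/ b) z z' ->
  psi L bv z i 0 = psi L bv z' i 0.
Proof.
move=> hL Du zz'; rewrite !mxE; congr (_ - _); apply: eq_bigr => j _.
have [eq_ij | ne_ij] := eqVneq (i %/ b)%N (j %/ b)%N.
  by rewrite (@blockLt_mulmx_agree _ z z') // -eq_ij.
by rewrite invmx_block_diagonal ?mul0r //; apply: blockD_block_diagonal.
Qed.

Lemma psi_fixed L bv :
  L \in unitmx -> blockD L \in unitmx -> psi L bv (invmx L *m bv) = invmx L *m bv.
Proof.
move=> Lu Du; rewrite /psi /blockLt mulmxBl mulKVmx // mulmxBr mulKmx //.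
by rewrite opprB addrC subrK.
Qed.

End BlockMatrices.

Section AsyncIteration.
Variables (T : Type) (m b : nat) (F : 'cV[T]_(m * b) -> 'cV[T]_(m * b)).
Variable y : 'cV[T]_(m * b).
Hypothesis F_agree :
  forall z (i : 'I_(m * b)), agree_below (i %/ b) z y -> F z i 0 = y i 0.
Variables (x : nat -> 'cV[T]_(m * b)) (s : 'I_(m * b) -> nat -> nat).
Variables (u : nat -> 'I_m) (shat : nat).
Hypothesis s_bounded :
  forall (i : 'I_(m * b)) (j : nat), (1 <= j)%N -> (s i j <= minn (j - 1) shat)%N.
Hypothesis u_recurrent : forall (k : 'I_m) (j : nat), exists l, (j < l)%N /\ u l = k.
Hypothesis x_step : forall j, (1 <= j)%N -> forall i : 'I_(m * b),
  x j.+1 i 0 = if (i %/ b == u j)%N then F (\col_k x (j - s k j)%N k 0) i 0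
               else x j i 0.

Lemma async_agree_succ c J : (c < m)%N ->
  (forall j, (J <= j)%N -> agree_below c (x j) y) ->
  exists J', forall j, (J' <= j)%N -> agree_below c.+1 (x j) y.
Proof.
move=> lt_cm settled; pose k := Ordinal lt_cm.
have [l [lt_l ul]] := u_recurrent k (J + shat).
have updated j (i : 'I_(m * b)) : (l <= j)%N -> u j = k -> (i %/ b)%N = c ->
    x j.+1 i 0 = y i 0.
  move=> le_lj ujk ic; rewrite x_step; last by lia.
  rewrite ic ujk eqxx; apply: F_agree => i' lt_i'; rewrite mxE ic in lt_i' *.
  apply: settled lt_i'; have := s_bounded i' (_ : 1 <= j)%N; lia.
have kept d (i : 'I_(m * b)) : (i %/ b)%N = c -> x (l + d).+1 i 0 = y i 0.
  move=> ic; elim: d => [|d IHd]; first by rewrite addn0 updated.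
  have [ujk | ujk] := eqVneq (u (l + d.+1)%N) k; first by rewrite updated //; lia.
  rewrite x_step; last by lia.
  rewrite ifF ?addnS // ic; apply: contraNF ujk => /eqP ck.
  by apply/eqP/val_inj; rewrite /= ck addnS.
exists l.+1 => j le_lj i; rewrite ltnS leq_eqVlt => /orP[/eqP ic | lt_ic].
  by rewrite (_ : j = (l + (j - l.+1)).+1) ?kept //; lia.
by apply: settled lt_ic; lia.
Qed.

Lemma async_agree c : (c <= m)%N ->
  exists J, forall j, (J <= j)%N -> agree_below c (x j) y.
Proof.
elim: c => [_ | c IHc lt_cm]; first by exists 0%N.
by have [J settled] := IHc (ltnW lt_cm); apply: async_agree_succ settled.
Qed.

End AsyncIteration.

Theorem theorem4 (R : realFieldType) (m b : nat) (L : 'M[R]_(m * b))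
  (bv : 'cV[R]_(m * b))
  (x : nat -> 'cV[R]_(m * b))
  (s : 'I_(m * b) -> nat -> nat) (u : nat -> 'I_m) (shat : nat) :
  lower_block_triangular L ->
  (forall k : 'I_m, diag_block L k \in unitmx) ->
  (forall (alpha : 'I_(m * b)) (j : nat), (1 <= j)%N ->
     (s alpha j <= minn (j - 1) shat)%N) ->
  (forall (i : 'I_m) (j : nat), exists l : nat, (j < l)%N /\ u l = i) ->
  (forall (j : nat), (1 <= j)%N -> forall alpha : 'I_(m * b),
     x j.+1 alpha 0 =
       if (alpha %/ b == u j)%N
       then psi L bv (\col_beta x (j - s beta j)%N beta 0) alpha 0
       else x j alpha 0) ->
  exists J : nat, forall j : nat, (J <= j)%N -> x j = invmx L *m bv.
Proof.
move=> hL hD s_bounded u_recurrent x_step.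
have Lu := lower_block_triangular_unitmx hL hD.
have Du := blockD_unitmx hL hD.
have psi_agree_sol z (i : 'I_(m * b)) : agree_below (i %/ b) z (invmx L *m bv) ->
    psi L bv z i 0 = (invmx L *m bv) i 0.
  by move=> agree; rewrite -psi_fixed //; apply: psi_agree.
have [J settled] := async_agree psi_agree_sol s_bounded u_recurrent x_step (leqnn m).
exists J => j le_Jj; apply/matrixP => i k; rewrite ord1.
exact: settled (block_lt i).
Qed.
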